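(* Let $0<a,b<1$, $f\ge3$, and let $\overline w_{m,n}$, $q^*_n(c)$, $w^*_n(c)$ be as in the context. Define the $2\times2$ matrices $$Q(b):=\begin{bmatrix}q^*_1(b)&w^*_1(b)\\ q^*_2(b)&w^*_2(b)\end{bmatrix},\qquad B:=\begin{bmatrix}\frac{b-a}{1-a}&\frac{1-b}{1-a}\\ \kappa(a,b)&\frac{1-b}{1-a}\beta(a,b)\end{bmatrix},\quad \kappa(a,b):=\frac{b-a}{1-a}\beta(a,b)-x(a,b),$$ let $M:=Q(b)^{-1}B$, and for $1\le\ell\le f$ let $\begin{bmatrix}d_1(\ell)\\ d_2(\ell)\end{bmatrix}:=M\begin{bmatrix}w^*_\ell(a)\\ w^*_{\ell+1}(a)\end{bmatrix}$. Then for all $1\le\ell\le f$ and $j\ge1$, $$\overline w_{f-\ell,f+j}=d_1(\ell)q^*_j(b)+d_2(\ell)w^*_j(b).$$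
   Context: Let $r,y,z$ be indeterminates. For $c\in(0,1)$: $\omega_c:=1-(1-c)^2r^2y^2z^2$, $\tau_c:=1+(1-c)^2r^2z^2y(1-y)$, $x_c:=c^2z^2\tau_c^2$, $\beta_c:=1+z^2(c^2-(1-c)^2r^2(y^2+c^2(1-y)^2z^2))$; $w^*_0(c):=(\beta_c-\omega_c)/x_c$, $w^*_1(c):=1$, $w^*_{n+1}(c):=\beta_cw^*_n(c)-x_cw^*_{n-1}(c)$ ($n\ge1$); $q^*_0(c):=-(1-y)(1+y+(1-c)^2r^2y^2z^2(1-y))/\tau_c^2$, $q^*_1(c):=y^2$, $q^*_{n+1}(c):=\beta_cq^*_n(c)-x_cq^*_{n-1}(c)$ ($n\ge1$). Also $\tau(a,b):=1+(1-a)(1-b)r^2z^2y(1-y)$, $x(a,b):=b^2z^2\tau(a,b)^2$, $\beta(a,b):=\beta_b-(b-a)b^2(1-b)r^2(1-y)^2z^4$. The upward array $\overline w_{m,n}$ ($0\le m<n$): $\overline w_{m,m+1}:=1$; for $n-m\ge2$: $\overline w_{m,m+\ell}:=w^*_\ell(a)$ if $m+\ell\le f$, $:=w^*_\ell(b)$ if $f\le m$; $\overline w_{f-\ell,f+1}:=\frac{1-b}{1-a}w^*_{\ell+1}(a)+\frac{b-a}{1-a}w^*_\ell(a)$ ($1\le\ell\le f$); $\overline w_{m,f+2}:=\beta(a,b)\overline w_{m,f+1}-x(a,b)\overline w_{m,f}$ ($m\le f-1$); $\overline w_{m,f+j+1}:=\beta_b\overline w_{m,f+j}-x_b\overline w_{m,f+j-1}$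 ($m\le f-1$, $j\ge2$). *)

From HB Require Import structures.
From mathcomp Require Import all_boot all_order all_algebra.
From mathcomp Require Import fraction.
From mathcomp Require Import mpoly.
Set Implicit Arguments. Unset Strict Implicit. Unset Printing Implicit Defensive.
Import Order.TTheory GRing.Theory Num.Theory.
Local Open Scope ring_scope.

(* The theorem instantiates F with the field of rational functions
   R(r,y,z) = Frac(R[r,y,z]) over a real field R, r y z the indeterminates. *)
Section Defs.
Variables (F : fieldType) (a b r y z : F) (f : nat).

Definition omega (c : F) : F := 1 - (1 - c) ^+ 2 * r ^+ 2 * y ^+ 2 * z ^+ 2.
Definition tau (c : F) : F := 1 + (1 - c) ^+ 2 * r ^+ 2 * z ^+ 2 * y * (1 - y).
Definition xc (c : F) : F := c ^+ 2 * z ^+ 2 * tau c ^+ 2.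
Definition betac (c : F) : F :=
  1 + z ^+ 2 * (c ^+ 2 - (1 - c) ^+ 2 * r ^+ 2 * (y ^+ 2 + c ^+ 2 * (1 - y) ^+ 2 * z ^+ 2)).

Fixpoint wstar (c : F) (n : nat) : F :=
  match n with
  | 0 => (betac c - omega c) / xc c
  | 1 => 1
  | S ((S k) as k1) => betac c * wstar c k1 - xc c * wstar c k
  end.

Fixpoint qstar (c : F) (n : nat) : F :=
  match n with
  | 0 => - ((1 - y) * (1 + y + (1 - c) ^+ 2 * r ^+ 2 * y ^+ 2 * z ^+ 2 * (1 - y)))
         / tau c ^+ 2
  | 1 => y ^+ 2
  | S ((S k) as k1) => betac c * qstar c k1 - xc c * qstar c k
  end.

Definition tauab : F := 1 + (1 - a) * (1 - b) * r ^+ 2 * z ^+ 2 * y * (1 - y).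
Definition xab : F := b ^+ 2 * z ^+ 2 * tauab ^+ 2.
Definition betaab : F :=
  betac b - (b - a) * b ^+ 2 * (1 - b) * r ^+ 2 * (1 - y) ^+ 2 * z ^+ 4.

(* For m <= f-1: the value \overline w_{m,f} *)
Definition wtail0 (m : nat) : F := if m.+1 == f then 1 else wstar a (f - m)%N.
(* For m <= f-1, ell = f - m: \overline w_{f-ell,f+1} *)
Definition wtail1 (m : nat) : F :=
  (1 - b) / (1 - a) * wstar a (f - m).+1 + (b - a) / (1 - a) * wstar a (f - m)%N.

(* wtail m j = \overline w_{m,f+j} for m <= f-1 *)
Fixpoint wtail (m j : nat) : F :=
  match j with
  | 0 => wtail0 m
  | 1 => wtail1 m
  | 2 => betaab * wtail1 m - xab * wtail0 m
  | S ((S ((S k) as k1)) as k2) => betac b * wtail m k2 - xc b * wtail m k1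
  end.

(* The upward array \overline w_{m,n}, for 0 <= m < n (set to 0 when n <= m). *)
Definition wbar (m n : nat) : F :=
  if (n <= m)%N then 0
  else if n == m.+1 then 1
  else if (n <= f)%N then wstar a (n - m)%N
  else if (f <= m)%N then wstar b (n - m)%N
  else wtail m (n - f)%N.

Definition mx2 (p q s t : F) : 'M[F]_2 :=
  \matrix_(i < 2, j < 2)
    if i == 0 :> nat then (if j == 0 :> nat then p else q)
    else (if j == 0 :> nat then s else t).

Definition Qb : 'M[F]_2 := mx2 (qstar b 1) (wstar b 1) (qstar b 2) (wstar b 2).
Definition kappa : F := (b - a) / (1 - a) * betaab - xab.
Definition Bmx : 'M[F]_2 :=
  mx2 ((b - a) / (1 - a)) ((1 - b) / (1 - a)) kappa ((1 - b) / (1 - a) * betaab).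
Definition Mmx : 'M[F]_2 := invmx Qb *m Bmx.

Definition dvec (l : nat) : 'cV[F]_2 :=
  Mmx *m (\col_(i < 2) if i == 0 :> nat then wstar a l else wstar a l.+1).
Definition d1 (l : nat) : F := dvec l 0 0.
Definition d2 (l : nat) : F := dvec l 1 0.

End Defs.

Definition ratfun (R : realFieldType) : fieldType :=
  {fraction {mpoly R[3]}}.
Definition rcst (R : realFieldType) (c : R) : ratfun R :=
  tofrac (mpoly.mpolyC 3 c).
Definition rvar (R : realFieldType) (i : 'I_3) : ratfun R :=
  tofrac (mpoly.mpolyX R (mpoly.mnm1 i)).
Definition rr (R : realFieldType) : ratfun R := rvar R 0.
Definition ry (R : realFieldType) : ratfun R := rvar R 1.
Definition rz (R : realFieldType) : ratfun R := rvar R 2.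

From HB Require Import structures.
From mathcomp Require Import all_boot all_order all_algebra.
From mathcomp Require Import fraction.
From mathcomp Require Import ring zify mpoly.
Set Implicit Arguments. Unset Strict Implicit. Unset Printing Implicit Defensive.
Import Order.TTheory GRing.Theory Num.Theory.
Local Open Scope ring_scope.

(** For j >= 1 the column j |-> wbar_{f-l,f+j} satisfies the recurrence
    u_{j+2} = beta_b u_{j+1} - x_b u_j, as do q*_j(b) and w*_j(b); so it is
    the combination d1 q*(b) + d2 w*(b) as soon as both agree at j = 1, 2.
    In matrix form this says Q(b) (d1, d2)^T = B (w*_l(a), w*_{l+1}(a))^T,
    which is the definition of d once Q(b) is invertible; and
    det Q(b) = -b^2 z^2 is nonzero in the field of rational functions. *)

Section TwoByTwo.
Variable F : fieldType.

Definition col2 (u0 u1 : F) : 'cV[F]_2 :=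
  \col_(i < 2) if i == 0 :> nat then u0 else u1.

Lemma sum_ord2 (g : 'I_2 -> F) : \sum_(k < 2) g k = g 0 + g 1.
Proof. by rewrite !big_ord_recl big_ord0 addr0; congr (g _ + g _); apply/val_inj. Qed.

Lemma col2E (v : 'cV[F]_2) : v = col2 (v 0 0) (v 1 0).
Proof.
apply/matrixP => i j; rewrite mxE (ord1 j).
by case: i => [[|[|]] ?] //=; congr (v _ _); apply/val_inj.
Qed.

Lemma col2_inj (u0 u1 v0 v1 : F) :
  col2 u0 u1 = col2 v0 v1 -> u0 = v0 /\ u1 = v1.
Proof.
move=> e; split.
- by have := congr1 (fun M : 'cV[F]_2 => M 0 0) e; rewrite !mxE.
- by have := congr1 (fun M : 'cV[F]_2 => M 1 0) e; rewrite !mxE.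
Qed.

Lemma mul_mx2_col2 (p q s t u0 u1 : F) :
  mx2 p q s t *m col2 u0 u1 = col2 (p * u0 + q * u1) (s * u0 + t * u1).
Proof. by apply/matrixP => i j; rewrite !mxE sum_ord2 !mxE; case: i => [[|[|]] ?]. Qed.

Lemma mx2_unit (p q s t : F) : p * t - q * s != 0 -> mx2 p q s t \in unitmx.
Proof.
move=> det_neq0.
suff: mx2 p q s t *m ((p * t - q * s)^-1 *: mx2 t (- q) (- s) p) = 1%:M.
  by case/mulmx1_unit.
apply/matrixP => i j; rewrite !mxE sum_ord2 !mxE.
by case: i => [[|[|]] ?]; case: j => [[|[|]] ?] //=; field.
Qed.

End TwoByTwo.

Section Recurrence.
Variables (F : fieldType) (beta x : F).

(* The recurrence is only required from index 1 on: index 0 holds the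
   irregular initial values w*_0, q*_0 and wbar_{m,f}. *)
Definition rec_from1 (u : nat -> F) : Prop :=
  forall k, u k.+3 = beta * u k.+2 - x * u k.+1.

Lemma rec_from1_lin (c d : F) (u v : nat -> F) :
  rec_from1 u -> rec_from1 v -> rec_from1 (fun k => c * u k + d * v k).
Proof. by move=> ru rv k; rewrite ru rv; ring. Qed.

Lemma rec_from1_eq (u v : nat -> F) :
  rec_from1 u -> rec_from1 v -> u 1%N = v 1%N -> u 2%N = v 2%N ->
  forall j, (0 < j)%N -> u j = v j.
Proof.
move=> ru rv e1 e2; suff e k : u k.+1 = v k.+1 /\ u k.+2 = v k.+2.
  by case=> // k _; case: (e k).
elim: k => [|k [ek1 ek2]]; first by [].
by split=> //; rewrite ru rv ek1 ek2.
Qed.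

End Recurrence.

Section Expansion.
Variables (F : fieldType) (a b r y z : F) (f : nat).

Local Notation ws := (wstar r y z).
Local Notation qs := (qstar r y z).
Local Notation wt := (wtail a b r y z f).

Lemma wstar_rec_from1 c : rec_from1 (betac r y z c) (xc r y z c) (ws c).
Proof. by []. Qed.

Lemma qstar_rec_from1 c : rec_from1 (betac r y z c) (xc r y z c) (qs c).
Proof. by []. Qed.

Lemma wtail_rec_from1 m : rec_from1 (betac r y z b) (xc r y z b) (wt m).
Proof. by []. Qed.

Lemma wbar_tail m j : (m < f)%N -> (0 < j)%N ->
  wbar a b r y z f m (f + j) = wt m j.
Proof.
move=> mf j_gt0; rewrite /wbar.
have -> : (f + j <= m)%N = false by lia.
have -> : (f + j == m.+1) = false by lia.
have -> : (f + j <= f)%N = false by lia.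
have -> : (f <= m)%N = false by lia.
by rewrite addKn.
Qed.

Lemma wtail0_eq l : (1 <= l <= f)%N -> wtail0 a r y z f (f - l) = ws a l.
Proof.
move=> /andP[l_gt0 lf]; rewrite /wtail0 subKn //.
by case: eqP => // ?; have -> : l = 1%N by lia.
Qed.

Lemma wtail_initial l : (1 <= l <= f)%N ->
  col2 (wt (f - l) 1) (wt (f - l) 2) = Bmx a b r y z *m col2 (ws a l) (ws a l.+1).
Proof.
move=> hl; rewrite mul_mx2_col2; simpl wtail.
rewrite /wtail1 wtail0_eq // subKn; last by case/andP: hl.
by congr col2; rewrite /kappa; ring.
Qed.

Lemma dvecE l : dvec a b r y z l = col2 (d1 a b r y z l) (d2 a b r y z l).
Proof. exact: col2E. Qed.

Lemma Qb_mul_dvec l : Qb b r y z \in unitmx ->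
  Qb b r y z *m dvec a b r y z l = Bmx a b r y z *m col2 (ws a l) (ws a l.+1).
Proof. by move=> Q_unit; rewrite /dvec /Mmx -mulmxA mulKVmx. Qed.

Lemma wtail_expansion l j : Qb b r y z \in unitmx -> (1 <= l <= f)%N -> (0 < j)%N ->
  wt (f - l) j = d1 a b r y z l * qs b j + d2 a b r y z l * ws b j.
Proof.
move=> Q_unit hl; have := Qb_mul_dvec l Q_unit.
rewrite dvecE -wtail_initial // mul_mx2_col2 => /col2_inj[wt1 wt2].
apply: (@rec_from1_eq _ _ _ (wt (f - l))
          (fun k => d1 a b r y z l * qs b k + d2 a b r y z l * ws b k)).
- exact: wtail_rec_from1.
- exact/rec_from1_lin/wstar_rec_from1/qstar_rec_from1.
- by rewrite -wt1; ring.
- by rewrite -wt2; ring.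
Qed.

Lemma Qb_det : b != 0 -> z != 0 -> tau r y z b != 0 ->
  qs b 1 * ws b 2 - ws b 1 * qs b 2 = - (b ^+ 2 * z ^+ 2).
Proof.
move=> b_neq0 z_neq0 tau_neq0; rewrite /= /xc /betac /omega.
by field; rewrite tau_neq0 z_neq0 b_neq0.
Qed.

Lemma Qb_unit : b != 0 -> z != 0 -> tau r y z b != 0 -> Qb b r y z \in unitmx.
Proof.
move=> b_neq0 z_neq0 tau_neq0; apply: mx2_unit.
by rewrite Qb_det // oppr_eq0 mulf_neq0 // expf_neq0.
Qed.

End Expansion.

Section RationalFunctions.
Variable R : realFieldType.

Lemma tofrac_meval_neq0 (P : {mpoly R[3]}) (v : 'I_3 -> R) :
  P.@[v] != 0 -> (tofrac P : ratfun R) != 0.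
Proof. by move=> Pv_neq0; rewrite tofrac_eq0; apply: contra Pv_neq0 => /eqP ->; rewrite meval0. Qed.

Lemma rz_neq0 : rz R != 0.
Proof. by apply: (@tofrac_meval_neq0 _ (fun _ => 1)); rewrite mevalXU oner_eq0. Qed.

Lemma rcst_neq0 (c : R) : c != 0 -> rcst c != 0.
Proof. by move=> c_neq0; rewrite /rcst tofrac_eq0 mpolyC_eq0. Qed.

Lemma tau_rcst_neq0 (c : R) : tau (rr R) (ry R) (rz R) (rcst c) != 0.
Proof.
pose X i : {mpoly R[3]} := mpolyX R (mnm1 i).
have -> : tau (rr R) (ry R) (rz R) (rcst c) =
    tofrac (1 + (1 - c%:MP) ^+ 2 * X 0 ^+ 2 * X 2 ^+ 2 * X 1 * (1 - X 1)).
  by rewrite !(tofracB, tofracD, tofracM, tofracXn, tofrac1).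
apply: (@tofrac_meval_neq0 _ (fun _ => 0)).
rewrite !(mevalB, mevalD, mevalM, rmorphXn, meval1, mevalC) /X !mevalXU.
by rewrite !mulr0 !mul0r addr0 oner_eq0.
Qed.

End RationalFunctions.

Theorem proposition3 (R : realFieldType) (a b : R) (f : nat) :
  0 < a < 1 -> 0 < b < 1 -> (3 <= f)%N ->
  forall l j : nat, (1 <= l <= f)%N -> (1 <= j)%N ->
    let A := rcst a in let B := rcst b in
    let r := rr R in let y := ry R in let z := rz R in
    wbar A B r y z f (f - l) (f + j)
    = d1 A B r y z l * qstar r y z B j + d2 A B r y z l * wstar r y z B j.
Proof.
move=> _ /andP[b_gt0 _] _ l j hl j_gt0 A B r y z.
have Q_unit : Qb B r y z \in unitmx.
  by apply: Qb_unit; [rewrite rcst_neq0 ?gt_eqF | exact: rz_neq0 | exact: tau_rcst_neq0].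
rewrite wbar_tail //; last by case/andP: hl => ? ?; lia.
exact: wtail_expansion.
Qed.
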